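(* For every integer $\omega$, there is a proof labeling scheme of size $O(\log n)$ for the class $\mathcal{G}_\omega$ of all graphs $G$ such that each connected component of $G$ admits an elimination tree of width at most $\omega$ which is a spanning tree of (i.e., a subgraph of) that component.
   Context: An elimination tree of a connected graph $G$ is a rooted tree $F$ with $V(F)=V(G)$ such that for every edge $uv$ of $G$, one of $u,v$ is an ancestor of the other in $F$. For $v\in V(F)$ let $F_v$ be the subtree rooted at $v$ and let $\mathsf{str}(v)$ consist of $v$ together with all strict ancestors of $v$ that have a neighbour (in $G$) in $V(F_v)$. The width of $F$ is $\max_v|\mathsf{str}(v)|-1$. Each vertex has a unique identifier in $\{1,\dots,n\}$. A proof labeling scheme for a class $\Pi$: a prover assigns binary labels to vertices; a verifier at $v$ sees only $\mathsf{id}(v)$ and $(\mathsf{id}(w),\varphi(w))$ for $w\in N[v]$ and outputs Yes/No; completeness: on graphs in $\Pi$ the prover's labels make all vertices output Yes; soundness: on graphs not in $\Pi$, for every labeling some vertex outputs No. Size $O(\log n)$: all labels have length $O(\log n)$. *)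

From mathcomp Require Import all_boot all_order all_algebra.
Set Implicit Arguments. Unset Strict Implicit. Unset Printing Implicit Defensive.
Import GRing.Theory Num.Theory.

Definition simple_graph (n : nat) (e : rel 'I_n) : Prop :=
  (forall u v, e u v = e v u) /\ (forall v, ~~ e v v).

Definition component n (e : rel 'I_n) (v : 'I_n) : {set 'I_n} :=
  [set u | connect e v u].

Definition rooted_tree_on n (C : {set 'I_n}) (r : 'I_n) (p : 'I_n -> 'I_n) : Prop :=
  [/\ r \in C, p r = r,
      forall v, v \in C -> p v \in C
    & forall v, v \in C -> exists k, iter k p v = r].

(* u is an ancestor of v (non-strict: includes u = v): u is reached
   from v by following parent pointers (at most n steps suffice on n
   vertices; this makes the predicate boolean). *)
Definition ancestor n (p : 'I_n -> 'I_n) (u v : 'I_n) : bool :=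
  [exists k : 'I_n.+1, iter k p v == u].

Definition elimination_tree n (e : rel 'I_n) (C : {set 'I_n}) r p : Prop :=
  rooted_tree_on C r p /\
  forall u v, u \in C -> e u v -> ancestor p u v \/ ancestor p v u.

Definition tree_is_subgraph n (e : rel 'I_n) (C : {set 'I_n}) r p : Prop :=
  forall v, v \in C -> v != r -> e v (p v).

Definition subtree n (C : {set 'I_n}) (p : 'I_n -> 'I_n) (v : 'I_n) : {set 'I_n} :=
  [set u in C | ancestor p v u ].

Definition str n (e : rel 'I_n) (C : {set 'I_n}) (p : 'I_n -> 'I_n) (v : 'I_n)
  : {set 'I_n} :=
  v |: [set a | [&& a != v, ancestor p a v
                 & [exists w in subtree C p v, e a w]]].

Definition width_le n (e : rel 'I_n) (C : {set 'I_n}) p (w : int) : Prop :=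
  forall v, v \in C -> ((#|str e C p v|)%:Z - 1 <= w)%R.

Definition in_G_omega (w : int) n (e : rel 'I_n) : Prop :=
  forall v : 'I_n, exists (r : 'I_n) (p : 'I_n -> 'I_n),
    let C := component e v in
    [/\ elimination_tree e C r p, tree_is_subgraph e C r p & width_le e C p w].

Definition valid_ids n (id : 'I_n -> nat) : Prop :=
  injective id /\ forall v, 1 <= id v <= n.

(* Local view of v: the pairs (id w, label w) for w in N[v], listed in
   increasing order of identifier (a canonical encoding of the set). *)
Definition view n (e : rel 'I_n) (id : 'I_n -> nat) (lab : 'I_n -> bitseq)
  (v : 'I_n) : seq (nat * bitseq) :=
  sort (fun a b => a.1 <= b.1)
       [seq (id w, lab w) | w <- enum 'I_n & (w == v) || e v w].

Definition verifier := nat -> seq (nat * bitseq) -> bool.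

Definition has_log_PLS (P : forall n, rel 'I_n -> Prop) : Prop :=
  exists (ver : verifier) (c : nat),
  forall n (e : rel 'I_n) (id : 'I_n -> nat),
    simple_graph e -> valid_ids id ->
    (P n e ->
       exists lab : 'I_n -> bitseq,
         (forall v, size (lab v) <= c * (trunc_log 2 n).+1) /\
         (forall v, ver (id v) (view e id lab v))) /\
    (~ P n e -> forall lab : 'I_n -> bitseq, exists v, ver (id v) (view e id lab v) = false).

From mathcomp Require Import all_boot all_order all_algebra zify.
From Stdlib Require Import ClassicalEpsilon.
Set Implicit Arguments. Unset Strict Implicit. Unset Printing Implicit Defensive.

(* The prover certifies, in each component, the given elimination tree F: the
   label of v encodes the identifiers of the root and of the parent of v, the
   depth of v, and the identifiers of str(v), i.e. O((w + 4) log n) bits.  A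
   vertex accepts if its neighbours agree on the root, its list has at most
   w + 1 entries and contains itself, every neighbour that is not deeper is in
   its list (such a neighbour is an ancestor adjacent to F_v), and its parent is
   a neighbour one level up whose list contains its own list minus itself.
   Conversely, accepted labels make the decoded parent pointers strictly
   decrease depth inside a component, so they form a spanning tree rooted at
   the unique vertex of depth 0; by induction on depth every identifier in the
   list of v is that of an ancestor of v, so each edge joins a vertex to an
   ancestor, and the lists contain the true sets str(v), bounding the width. *)

Fixpoint bits_of_nat (fuel k : nat) : bitseq :=
  if fuel is fuel'.+1 then
    if k == 0 then [::] else odd k :: bits_of_nat fuel' k./2
  else [::].

Definition nat_of_bits (s : bitseq) : nat := foldr (fun (b : bool) m => b + m.*2) 0 s.

(* Self-delimiting code: each bit [b] is written [true; b], and [false] ends the word. *)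
Definition encode_bits (x : bitseq) : bitseq :=
  flatten [seq [:: true; b] | b <- x] ++ [:: false].

Fixpoint decode_bits (s : bitseq) : seq bitseq :=
  match s with
  | false :: s' => [::] :: decode_bits s'
  | true :: b :: s' =>
      if decode_bits s' is x :: xs then (b :: x) :: xs else [:: [:: b]]
  | _ => [::]
  end.

Definition encode_nats (s : seq nat) : bitseq :=
  flatten [seq encode_bits (bits_of_nat k k) | k <- s].

Definition decode_nats (l : bitseq) : seq nat := map nat_of_bits (decode_bits l).

Lemma bits_of_natK fuel k : k <= fuel -> nat_of_bits (bits_of_nat fuel k) = k.
Proof.
elim: fuel k => [|fuel IH] k /=; first by rewrite leqn0 => /eqP->.
case: eqP => [->//|/eqP k0 kf] /=.
rewrite IH ?odd_double_half // -divn2; lia.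
Qed.

Lemma decode_bits_cat x s : decode_bits (encode_bits x ++ s) = x :: decode_bits s.
Proof. by elim: x => //= b x; rewrite /encode_bits => /= ->. Qed.

Lemma encode_natsK : cancel encode_nats decode_nats.
Proof.
rewrite /decode_nats; elim=> [|k s IH] //=.
by rewrite /encode_nats /= decode_bits_cat /= bits_of_natK // IH.
Qed.

Lemma size_bits_of_nat fuel k m : k < 2 ^ m -> size (bits_of_nat fuel k) <= m.
Proof.
elim: fuel k m => [|fuel IH] k [|m] //=; case: eqP => // /eqP k0; first by rewrite expn0; lia.
rewrite expnS => km; apply: IH; rewrite -divn2; move: km; set X := 2 ^ m; lia.
Qed.

Lemma size_encode_bits x : size (encode_bits x) = (size x).*2.+1.
Proof. by rewrite size_cat addn1; elim: x => //= b x ->; rewrite doubleS. Qed.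

Lemma size_encode_nats s n : all (leq^~ n) s ->
  size (encode_nats s) <= size s * (3 * (trunc_log 2 n).+1).
Proof.
have n_lt := @trunc_log_ltn 2 n erefl.
elim: s => //= k s IH /andP[kn /IH {}IH].
rewrite /encode_nats /= size_cat mulSn leq_add // size_encode_bits.
have : size (bits_of_nat k k) <= (trunc_log 2 n).+1.
  by apply: size_bits_of_nat; apply: leq_ltn_trans kn n_lt.
lia.
Qed.

Lemma ancestorP n (p : 'I_n -> 'I_n) a v :
  reflect (exists k, iter k p v = a) (ancestor p a v).
Proof.
apply: (iffP existsP) => [[k /eqP <-]|[k hk]]; first by exists k.
have va : fconnect p v a by rewrite -hk fconnect_iter.
have a_lt : findex p v a < n.+1.
  apply: leq_trans (findex_max va) (leqW _).
  by apply: leq_trans (max_card _) _; rewrite card_ord.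
by exists (Ordinal a_lt); rewrite /= iter_findex.
Qed.

Definition label_of (V : seq (nat * bitseq)) (i : nat) : bitseq :=
  (nth (0, [::]) V (find (fun x => x.1 == i) V)).2.

Section View.
Variables (n : nat) (e : rel 'I_n) (id : 'I_n -> nat) (lab : 'I_n -> bitseq).

Lemma mem_view v a b : ((a, b) \in view e id lab v) =
  [exists x, [&& (x == v) || e v x, a == id x & b == lab x]].
Proof.
rewrite /view mem_sort; apply/mapP/existsP => [[x]|[x /and3P[vx /eqP-> /eqP->]]].
  by rewrite mem_filter mem_enum andbT => vx [-> ->]; exists x; rewrite vx !eqxx.
by exists x; rewrite // mem_filter mem_enum vx.
Qed.

Lemma in_view v x : (x == v) || e v x -> (id x, lab x) \in view e id lab v.
Proof. by move=> vx; rewrite mem_view; apply/existsP; exists x; rewrite vx !eqxx. Qed.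

Lemma in_viewP v a b : (a, b) \in view e id lab v ->
  exists2 x, (x == v) || e v x & a = id x /\ b = lab x.
Proof. by rewrite mem_view => /existsP[x /and3P[vx /eqP-> /eqP->]]; exists x. Qed.

Lemma label_of_view v : injective id -> label_of (view e id lab v) (id v) = lab v.
Proof.
move=> id_inj; rewrite /label_of; set V := view _ _ _ _.
have hasv : has (fun x => x.1 == id v) V.
  by apply/hasP; exists (id v, lab v); rewrite ?in_view ?eqxx.
have := nth_find (0, [::]) hasv; rewrite has_find in hasv.
have := mem_nth (0, [::]) hasv; case: (nth _ _ _) => a b /in_viewP[x _ [-> ->]] /=.
by move=> /eqP /id_inj ->.
Qed.

End View.

Definition lab_root (l : bitseq) : nat := nth 0 (decode_nats l) 0.
Definition lab_parent (l : bitseq) : nat := nth 0 (decode_nats l) 1.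
Definition lab_depth (l : bitseq) : nat := nth 0 (decode_nats l) 2.
Definition lab_str (l : bitseq) : seq nat := drop 3 (decode_nats l).

Definition local_ok (w : int) (i : nat) (l : bitseq) (V : seq (nat * bitseq)) : bool :=
  [&& all (fun x => lab_root x.2 == lab_root l) V,
      ((size (lab_str l))%:Z - 1 <= w)%R,
      i \in lab_str l,
      all (fun x => (x.1 != i) ==> (lab_depth x.2 <= lab_depth l) ==> (x.1 \in lab_str l)) V
    & if lab_depth l == 0 then
        [&& i == lab_root l, lab_parent l == i & all (pred1 i) (lab_str l)]
      else has (fun x => [&& x.1 == lab_parent l, lab_depth x.2 == (lab_depth l).-1
                           & all (fun s => (s == i) || (s \in lab_str x.2)) (lab_str l)]) V].

Definition pls_verifier (w : int) : verifier := fun i V => local_ok w i (label_of V i) V.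

Section Soundness.
Variables (w : int) (n : nat) (e : rel 'I_n) (id : 'I_n -> nat) (lab : 'I_n -> bitseq).
Hypotheses (e_simple : simple_graph e) (id_valid : valid_ids id).
Hypothesis accepts : forall v, pls_verifier w (id v) (view e id lab v).

Let id_inj : injective id := id_valid.1.
Let R v := lab_root (lab v).
Let P v := lab_parent (lab v).
Let D v := lab_depth (lab v).
Let S v := lab_str (lab v).

Lemma local_ok_at v : local_ok w (id v) (lab v) (view e id lab v).
Proof. by have := accepts v; rewrite /pls_verifier label_of_view. Qed.

Lemma ok_root v x : (x == v) || e v x -> R x = R v.
Proof. by move=> vx; case/and5P: (local_ok_at v) => /allP/(_ _ (in_view id lab vx))/eqP. Qed.

Lemma ok_width v : ((size (S v))%:Z - 1 <= w)%R.
Proof. by case/and5P: (local_ok_at v). Qed.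

Lemma ok_self v : id v \in S v.
Proof. by case/and5P: (local_ok_at v). Qed.

Lemma ok_nbr v x : e v x -> D x <= D v -> id x \in S v.
Proof.
move=> vx xv; have vx' : (x == v) || e v x by rewrite vx orbT.
case/and5P: (local_ok_at v) => _ _ _ /allP/(_ _ (in_view id lab vx')) /= + _.
suff -> : id x != id v by rewrite xv.
by apply: contraTneq vx => /id_inj->; rewrite (negbTE (e_simple.2 v)).
Qed.

Lemma ok_depth0 v : D v = 0 ->
  [/\ id v = R v, P v = id v & forall s, s \in S v -> s = id v].
Proof.
move=> Dv; case/and5P: (local_ok_at v) => _ _ _ _; rewrite -/(D v) Dv eqxx.
by case/and3P => /eqP vR /eqP Pv /allP S1; split=> // s /S1 /eqP.
Qed.

Lemma ok_depthS v : D v != 0 -> exists x, [/\ (x == v) || e v x, id x = P v,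
  D x = (D v).-1 & forall s, s \in S v -> s = id v \/ s \in S x].
Proof.
move=> Dv; case/and5P: (local_ok_at v) => _ _ _ _; rewrite -/(D v) (negbTE Dv).
case/hasP => [[a b]] /in_viewP[x vx [-> ->]] /and3P[/eqP Px /eqP Dx /allP Sx].
by exists x; split=> // s /Sx /orP[/eqP|]; [left|right].
Qed.

Definition decoded_parent (u : 'I_n) : 'I_n :=
  odflt u [pick x | ((x == u) || e u x) && (id x == P u)].

Local Notation par := decoded_parent.

Lemma decoded_parent0 v : D v = 0 -> par v = v.
Proof.
case/ok_depth0 => _ Pv _; rewrite /par; case: pickP => //= x /andP[_ /eqP].
by rewrite Pv => /id_inj.
Qed.

Lemma decoded_parentS v : D v != 0 -> [/\ e v (par v), D (par v) = (D v).-1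
  & forall s, s \in S v -> s = id v \/ s \in S (par v)].
Proof.
move=> Dv; have [x [vx idx Dx Sx]] := ok_depthS Dv.
have -> : par v = x.
  rewrite /par; case: pickP => [y /andP[_ /eqP]|/(_ x)]; last by rewrite vx idx eqxx.
  by rewrite -idx => /id_inj.
by split=> //; case/orP: vx => // /eqP xv; move: Dx Dv; rewrite xv; lia.
Qed.

Lemma depth_iter_parent k u : D (iter k par u) = D u - k.
Proof.
elim: k u => [|k IH] u; first by rewrite subn0.
rewrite iterSr IH; have [Du|Du] := eqVneq (D u) 0; first by rewrite decoded_parent0 Du.
by have [_ -> _] := decoded_parentS Du; lia.
Qed.

Lemma iter_parent_depth k u : iter k par u = u \/ D (iter k par u) < D u.
Proof.
elim: k u => [|k IH] u; first by left.
rewrite iterSr; have [Du|Du] := eqVneq (D u) 0; first by rewrite decoded_parent0.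
have [_ Dpar _] := decoded_parentS Du.
by right; case: (IH (par u)) => [->|]; rewrite Dpar; lia.
Qed.

Lemma lab_str_ancestor v s : s \in S v -> exists2 a, id a = s & ancestor par a v.
Proof.
have [d] := ubnP (D v); elim: d v => // d IH v Dv sv.
have v_anc : ancestor par v v by apply/ancestorP; exists 0.
have [Dv0|Dv0] := eqVneq (D v) 0.
  by have [_ _ S1] := ok_depth0 Dv0; exists v; rewrite // (S1 _ sv).
have [_ Dpar Spar] := decoded_parentS Dv0.
case: (Spar _ sv) => [->|]; first by exists v.
case/IH=> [|a ids /ancestorP[k ak]]; first by rewrite Dpar; lia.
by exists a => //; apply/ancestorP; exists k.+1; rewrite iterSr.
Qed.

Lemma lab_str_up k y a : id a \in S y -> D a < D (iter k par y) -> id a \in S (iter k par y).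
Proof.
elim: k y => [//|k IH] y ay; rewrite iterSr => Da; apply: IH => //.
have [Dy|Dy] := eqVneq (D y) 0; first by rewrite decoded_parent0.
have [_ _ Spar] := decoded_parentS Dy; case: (Spar _ ay) => // /id_inj ya; subst y.
have := iter_parent_depth k.+1 a; rewrite iterSr => -[a_fix|].
  by rewrite a_fix ltnn in Da.
by rewrite ltnNge (ltnW Da).
Qed.

Lemma connect_lab_root u v : connect e u v -> R v = R u.
Proof.
case/connectP=> s; elim: s u => [|x s IH] u /=; first by move=> _ ->.
by case/andP=> ux xs /(IH _ xs)->; apply: ok_root; rewrite ux orbT.
Qed.

Lemma connect_decoded_parent u : connect e u (par u).
Proof.
have [Du|Du] := eqVneq (D u) 0; first by rewrite decoded_parent0.
by have [eu _ _] := decoded_parentS Du; apply: connect1.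
Qed.

Lemma connect_iter_parent k u : connect e u (iter k par u).
Proof. by elim: k => //= k IH; apply: connect_trans IH (connect_decoded_parent _). Qed.

Definition decoded_root (u : 'I_n) : 'I_n := iter (D u) par u.

Lemma decoded_root_depth u : D (decoded_root u) = 0.
Proof. by rewrite depth_iter_parent subnn. Qed.

Lemma connect_decoded_root u v : connect e u v -> decoded_root u = decoded_root v.
Proof.
move=> uv; apply: id_inj.
have [-> _ _] := ok_depth0 (decoded_root_depth u).
have [-> _ _] := ok_depth0 (decoded_root_depth v).
by rewrite !(connect_lab_root (connect_iter_parent _ _)) (connect_lab_root uv).
Qed.

Lemma edge_ancestor u v : e u v -> D v <= D u -> ancestor par v u.
Proof. by move=> uv /(ok_nbr uv)/lab_str_ancestor[a /id_inj->]. Qed.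

Lemma str_lab_str C v a : a \in str e C par v -> id a \in S v.
Proof.
rewrite /str !inE => /orP[/eqP->|]; first exact: ok_self.
case/and3P=> av /ancestorP[k vk] /existsP[y /andP[]].
rewrite /subtree inE => /andP[_ /ancestorP[j yj]] ay.
have Dav : D a < D v.
  by case: (iter_parent_depth k v) => [|]; rewrite vk // => av'; rewrite av' eqxx in av.
have Dvy : D v <= D y by case: (iter_parent_depth j y) => [|/ltnW]; rewrite yj // => ->.
rewrite -yj; apply: lab_str_up; last by rewrite yj.
by apply: ok_nbr; rewrite 1?e_simple.1 //; apply: leq_trans (ltnW Dav) Dvy.
Qed.

Lemma card_str_le C v : #|str e C par v| <= size (S v).
Proof.
rewrite cardE -(size_map id); apply: uniq_leq_size; first by rewrite map_inj_uniq ?enum_uniq.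
by move=> x /mapP[a]; rewrite mem_enum => /str_lab_str ? ->.
Qed.

Theorem sound : in_G_omega w e.
Proof.
move=> v0; exists (decoded_root v0), par => C.
have inC u : (u \in C) = connect e v0 u by rewrite inE.
have rootC u : u \in C -> iter (D u) par u = decoded_root v0.
  by rewrite inC => /connect_decoded_root->.
split.
- split.
    split=> [||u|u uC]; last by exists (D u); apply: rootC.
    + by rewrite inC connect_iter_parent.
    + exact/decoded_parent0/decoded_root_depth.
    + by rewrite !inC => /connect_trans; apply; apply: connect_decoded_parent.
  move=> u v _ uv; have [vu|uv'] := leqP (D v) (D u); first by right; apply: edge_ancestor.
  by left; apply: edge_ancestor; rewrite 1?e_simple.1 // ltnW.
- move=> v vC; have [Dv|Dv] := eqVneq (D v) 0; last by case: (decoded_parentS Dv).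
  by move: (rootC v vC); rewrite Dv /= => ->; rewrite eqxx.
- by move=> v _; have := card_str_le C v; have := ok_width v; lia.
Qed.

End Soundness.

Section RootedTreeDepth.
Variables (n : nat) (C : {set 'I_n}) (r : 'I_n) (p : 'I_n -> 'I_n).
Hypothesis tree : rooted_tree_on C r p.

Definition tree_depth (u : 'I_n) : nat := findex p u r.

Lemma iter_root k : iter k p r = r.
Proof. by case: tree => _ pr _ _; apply: iter_fix. Qed.

Lemma iter_tree_depth u : u \in C -> iter (tree_depth u) p u = r.
Proof.
case: tree => _ _ _ /[apply] -[k ur]; apply: iter_findex.
by rewrite -ur fconnect_iter.
Qed.

Lemma tree_depth_min u k : iter k p u = r -> tree_depth u <= k.
Proof.
move=> ur; have u_r : fconnect p u r by rewrite -ur fconnect_iter.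
have [k_lt|/(leq_trans (findex_max u_r))/ltnW//] := ltnP k (order p u).
by rewrite /tree_depth -ur findex_iter.
Qed.

Lemma tree_depth_lt u : u \in C -> tree_depth u < n.
Proof.
move=> uC; have u_r : fconnect p u r by rewrite -(iter_tree_depth uC) fconnect_iter.
apply: leq_trans (findex_max u_r) _.
by apply: leq_trans (max_card _) _; rewrite card_ord.
Qed.

Lemma tree_depth_root : tree_depth r = 0.
Proof. exact: findex0. Qed.

Lemma tree_depth_parent u : u \in C -> u != r -> tree_depth (p u) = (tree_depth u).-1.
Proof.
move=> uC ur; have ur' := iter_tree_depth uC.
have du : tree_depth u != 0 by apply: contraNneq ur => du; rewrite -ur' du.
apply/eqP; rewrite eqn_leq; apply/andP; split.
  by apply: tree_depth_min; rewrite -iterSr prednK ?lt0n.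
have := @tree_depth_min u (tree_depth (p u)).+1.
by rewrite iterSr iter_tree_depth => [/(_ erefl)|]; [lia | case: tree => _ _ ->].
Qed.

Lemma tree_depth_ancestor u j : u \in C -> iter j p u != u ->
  tree_depth (iter j p u) < tree_depth u.
Proof.
move=> uC; have ur := iter_tree_depth uC.
have [du_j|j_lt] := leqP (tree_depth u) j.
  rewrite -(subnK du_j) iterD ur iter_root tree_depth_root lt0n => rNu.
  by apply: contraNneq rNu => du0; rewrite -ur du0.
case: j j_lt => [|j] j_lt; first by rewrite eqxx.
have := @tree_depth_min (iter j.+1 p u) (tree_depth u - j.+1).
by rewrite -iterD subnK ?(ltnW j_lt) // => /(_ ur); lia.
Qed.

Lemma str_root (e : rel 'I_n) x : x \in str e C p r -> x = r.
Proof. by rewrite /str !inE => /orP[/eqP //|/and3P[_ /ancestorP[k <-] _]]; apply: iter_root. Qed.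

End RootedTreeDepth.

Lemma str_parent n (e : rel 'I_n) C (p : 'I_n -> 'I_n) v a :
  a \in str e C p v -> a != v -> a \in str e C p (p v).
Proof.
rewrite /str !inE => /orP[/eqP->|]; first by rewrite eqxx.
case/and3P=> _ /ancestorP[[|k] vk] /existsP[y /andP[yv ay]] av; first by rewrite -vk eqxx in av.
have [->|apv] := eqVneq a (p v); rewrite ?eqxx //=; apply/andP; split.
  by apply/ancestorP; exists k; rewrite -iterSr.
apply/existsP; exists y; rewrite ay andbT.
move: yv; rewrite /subtree !inE => /andP[-> /ancestorP[j yj]].
by apply/ancestorP; exists j.+1; rewrite iterS yj.
Qed.

Section Completeness.
Variables (w : int) (n : nat) (e : rel 'I_n) (id : 'I_n -> nat).
Hypotheses (e_simple : simple_graph e) (id_valid : valid_ids id).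
Variables (C : {set 'I_n}) (r : 'I_n) (p : 'I_n -> 'I_n).
Hypotheses (elim_tree : elimination_tree e C r p) (tree_sub : tree_is_subgraph e C r p).
Hypotheses (width : width_le e C p w) (C_closed : forall u x, u \in C -> e u x -> x \in C).

Let tree : rooted_tree_on C r p := elim_tree.1.
Local Notation depth := (tree_depth r p).

Definition tree_label (u : 'I_n) : bitseq :=
  encode_nats ([:: id r; id (p u); depth u] ++ map id (enum (str e C p u))).

Lemma tree_labelE u :
  [/\ lab_root (tree_label u) = id r, lab_parent (tree_label u) = id (p u),
      lab_depth (tree_label u) = depth u
    & lab_str (tree_label u) = map id (enum (str e C p u))].
Proof. by rewrite /lab_root /lab_parent /lab_depth /lab_str encode_natsK /= drop0. Qed.

Lemma size_tree_label u : u \in C ->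
  size (tree_label u) <= 3 * (absz w + 4) * (trunc_log 2 n).+1.
Proof.
move=> uC; rewrite /tree_label; set s := (X in encode_nats X).
have s_le : all (leq^~ n) s.
  have id_le x : id x <= n by case/andP: (id_valid.2 x).
  rewrite /= !id_le /= (ltnW (tree_depth_lt tree uC)).
  by apply/allP => _ /mapP[x _ ->].
apply: leq_trans (size_encode_nats s_le) _.
rewrite size_cat size_map -cardE /=; have := width uC; set m := #|_| => m_le.
have : m <= absz w + 1 by lia.
set t := (trunc_log 2 n).+1; nia.
Qed.

Lemma nbr_in_str v x : v \in C -> e v x -> x != v -> depth x <= depth v ->
  x \in str e C p v.
Proof.
move=> vC vx xNv dxv; rewrite /str !inE (negbTE xNv) /=.
case: elim_tree => _ /(_ v x vC vx) [/ancestorP[j vj]|->].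
  by have := tree_depth_ancestor tree (C_closed vC vx) (j := j); rewrite vj eq_sym xNv; lia.
apply/existsP; exists v; rewrite /subtree !inE vC (e_simple.1 x v) vx andbT.
by apply/ancestorP; exists 0.
Qed.

Lemma tree_label_accepted (lab : 'I_n -> bitseq) v : v \in C ->
  (forall x, (x == v) || e v x -> lab x = tree_label x) ->
  pls_verifier w (id v) (view e id lab v).
Proof.
move=> vC lab_nbr; rewrite /pls_verifier (label_of_view _ _ _ id_valid.1) /local_ok.
rewrite (lab_nbr v) ?eqxx //; have [-> -> -> ->] := tree_labelE v.
apply/and5P; split.
- apply/allP => -[a b] /in_viewP[x vx [_ ->]] /=.
  by rewrite lab_nbr //; have [-> _ _ _] := tree_labelE x.
- by rewrite size_map -cardE; apply: width.
- by rewrite map_f // mem_enum /str setU11.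
- apply/allP => -[a b] /in_viewP[x vx [-> ->]] /=; apply/implyP => xNv; apply/implyP.
  rewrite lab_nbr //; have [_ _ -> _] := tree_labelE x => dxv.
  have {}xNv : x != v by apply: contraNneq xNv => ->.
  by rewrite map_f // mem_enum nbr_in_str //; move: vx; rewrite (negbTE xNv).
case: ifP => [/eqP d0|/negbT d0].
  have vr : v = r by rewrite -(iter_tree_depth tree vC) d0.
  have [_ pr _ _] := tree; rewrite vr pr !eqxx /=.
  by apply/allP => y /mapP[x]; rewrite mem_enum => /(str_root tree) -> ->; rewrite /= eqxx.
have vNr : v != r by apply: contraNneq d0 => ->; rewrite tree_depth_root.
apply/hasP; exists (id (p v), lab (p v)); first by apply: in_view; rewrite tree_sub ?orbT.
rewrite /= lab_nbr ?tree_sub ?orbT //; have [_ _ -> ->] := tree_labelE (p v).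
rewrite eqxx (tree_depth_parent tree) // eqxx /=.
apply/allP => y /mapP[a]; rewrite mem_enum => av ->.
have [->|aNv] := eqVneq a v; first by rewrite eqxx.
by rewrite map_f ?orbT // mem_enum str_parent.
Qed.

End Completeness.

Lemma complete (w : int) n (e : rel 'I_n) (id : 'I_n -> nat) :
  simple_graph e -> valid_ids id -> in_G_omega w e ->
  exists lab : 'I_n -> bitseq,
    (forall v, size (lab v) <= 3 * (absz w + 4) * (trunc_log 2 n).+1) /\
    (forall v, pls_verifier w (id v) (view e id lab v)).
Proof.
move=> e_simple id_valid inG.
have e_sym : connect_sym e by apply: sym_connect_sym => x y; rewrite e_simple.1.
have tree_of v : {rp : 'I_n * ('I_n -> 'I_n) | let C := component e v in
    [/\ elimination_tree e C rp.1 rp.2, tree_is_subgraph e C rp.1 rp.2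
      & width_le e C rp.2 w]}.
  by apply: constructive_indefinite_description; have [r [p ?]] := inG v; exists (r, p).
pose T u := sval (tree_of (fingraph.root e u)).
pose lab u := tree_label e id (component e (fingraph.root e u)) (T u).1 (T u).2 u.
have inC v : v \in component e (fingraph.root e v) by rewrite inE e_sym connect_root.
have C_closed v u x : u \in component e v -> e u x -> x \in component e v.
  by rewrite !inE => vu /connect1; apply: connect_trans.
exists lab; split=> v; have [tree sub width] := svalP (tree_of (fingraph.root e v)).
  exact: (size_tree_label id_valid tree width (inC v)).
apply: (tree_label_accepted e_simple id_valid tree sub width (C_closed _) (inC v)).
move=> x vx; suff same_root : fingraph.root e x = fingraph.root e v by rewrite /lab /T same_root.
by apply/esym/(fingraph.rootP e_sym); case/orP: vx => [/eqP->|/connect1].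
Qed.

Theorem proposition5 (w : int) : has_log_PLS (in_G_omega w).
Proof.
exists (pls_verifier w), (3 * (absz w + 4)) => n e id e_simple id_valid.
split=> [|notG lab]; first exact: complete.
have [/forallP accepts|] := boolP [forall v, pls_verifier w (id v) (view e id lab v)].
  by case: notG; apply: sound accepts.
by rewrite negb_forall => /existsP[v /negbTE]; exists v.
Qed.
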